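(* Let $\chi>0$, $n\in\mathbb N\cup\{0\}$, and for $t\ge r_0$ and $z\in\mathbb C$ set $$\mathscr A_n(t;z)=\Big(|z|^{p_c-n}-(|t|^{-\chi}+|z|^2)^{\frac{p_c-n}2}\Big)z^n,\quad \mathscr B_n(t;z)=(|t|^{-\chi}+|z|^2)^{\frac{p_c-n}2}z^n,\quad \widetilde{\mathscr B}_n(t;z)=(|t|^{-\chi}+|z|^2)^{\frac{p_c-n}2}|z|^n.$$ Then, uniformly in $t\ge r_0$ and $z,w\in\mathbb C$: (i) if $p_c\in(0,2)$, then $|\mathscr A_n(t;z)|\lesssim|t|^{-\frac{p_c}2\chi}$; (ii) if $p_c\in(0,1)$, then $|\widetilde{\mathscr B}_n(t;z)-\widetilde{\mathscr B}_n(t;w)|+|\mathscr B_n(t;z)-\mathscr B_n(t;w)|\lesssim|z-w|^{p_c}$ and $|\mathscr A_0(t;z)z|\le|t|^{-p_c\chi}|z|^{1-p_c}$.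
   Context: $d\in\{1,2,3\}$, $\lambda<1/2$ (with $\lambda>-1/3$ if $d=3$), $p_c=2/(d(1-\lambda))$, and $r_0\ge1$ is a fixed number. $A\lesssim B$ means $A\le CB$ with $C$ independent of $t,z,w$. *)

From HB Require Import structures.
From mathcomp Require Import all_boot all_order all_algebra.
From mathcomp Require Import all_classical all_reals all_analysis.
From mathcomp Require Import complex.
Set Implicit Arguments. Unset Strict Implicit. Unset Printing Implicit Defensive.
Import Order.TTheory GRing.Theory Num.Theory.
Local Open Scope ring_scope.

Definition cabs (R : realType) (z : R[i]) : R := Normc.normc z.

Definition pc (R : realType) (d : nat) (lam : R) : R := 2 / (d%:R * (1 - lam)).

(* A_n(t;z) = (|z|^{p-n} - (|t|^{-chi} + |z|^2)^{(p-n)/2}) z^n ;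
   real powers via powR (0 `^ a = 0 for a <> 0, continuous extension). *)
Definition scrA (R : realType) (p chi : R) (n : nat) (t : R) (z : R[i]) : R[i] :=
  (((cabs z) `^ (p - n%:R) - (`|t| `^ (- chi) + cabs z ^+ 2) `^ ((p - n%:R) / 2))%:C)%C
  * z ^+ n.

Definition scrB (R : realType) (p chi : R) (n : nat) (t : R) (z : R[i]) : R[i] :=
  (((`|t| `^ (- chi) + cabs z ^+ 2) `^ ((p - n%:R) / 2))%:C)%C * z ^+ n.

Definition scrBt (R : realType) (p chi : R) (n : nat) (t : R) (z : R[i]) : R :=
  (`|t| `^ (- chi) + cabs z ^+ 2) `^ ((p - n%:R) / 2) * cabs z ^+ n.

From HB Require Import structures.
From mathcomp Require Import all_boot all_order all_algebra.
From mathcomp Require Import all_classical all_reals all_analysis.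
From mathcomp Require Import complex.
From mathcomp Require Import lra ring.
Import Order.TTheory GRing.Theory Num.Theory.
Set Implicit Arguments. Unset Strict Implicit.
Local Open Scope ring_scope.

(* Put eps = |t|^-chi and rho = (eps + |z|^2)^(1/2).  For z <> 0 write |z| = rho th
   with 0 < th <= 1, so that eps = rho^2 (1 - th^2).  Then |A_n| = rho^p |th^p - th^n|,
   and part (i) follows from |th^p - th^n| <= (n + 1) (1 - th^2) (as p <= 2) together
   with rho^p (1 - th^2) = rho^(p-2) eps <= eps^(p/2).  The bound on A_0 z is
   (1 - th^p) th^p <= (1 - th^2)^p multiplied by rho^(2p).
   For the Hoelder bound write B_n(z) = rho(z)^p (z / rho(z))^n: rho is 1-Lipschitz,
   being the modulus of |z| + i sqrt eps, x |-> x^p is p-Hoelder, and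
   |z / rho(z) - w / rho(w)| <= min(2, 2 |z - w| / rho(w)), so that rho(w)^p times it
   is at most 2 |z - w|^p.  Finally B~_n(t; z) = B_n(t; |z|) and ||z| - |w|| <= |z - w|. *)

Lemma normrXB_le (R : numDomainType) (u v : R) n :
  `|u| <= 1 -> `|v| <= 1 -> `|u ^+ n - v ^+ n| <= `|u - v| *+ n.
Proof.
move=> u1 v1; elim: n => [|n IH]; first by rewrite !expr0 subrr normr0.
have -> : u ^+ n.+1 - v ^+ n.+1 = u * (u ^+ n - v ^+ n) + (u - v) * v ^+ n.
  by rewrite !exprS mulrBr mulrBl addrA subrK.
rewrite mulrSr; apply: le_trans (ler_normD _ _) _; rewrite !normrM normrX.
apply: lerD; first exact: le_trans (ler_piMl _ u1) IH.
by rewrite ler_piMr // exprn_ile1.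
Qed.

Section RealPowers.
Variable R : realType.
Implicit Types (a b x th p q eps r : R).

Lemma ge0_ger1_powR a q : 0 <= a <= 1 -> q <= 1 -> a <= a `^ q.
Proof.
case/andP=> a0 a1 q1; have [->|an0] := eqVneq a 0; first exact: powR_ge0.
by apply: ger1_powR; rewrite // lt_def an0 a0.
Qed.

Lemma powR_le1 a q : 0 <= a <= 1 -> 0 <= q -> a `^ q <= 1.
Proof.
case/andP=> a0 a1 q0.
by have := @ge0_ler_powR R q q0 a 1; rewrite !nnegrE powR1; apply.
Qed.

Lemma powR_sqr_half a q : 0 <= a -> (a ^+ 2) `^ (q / 2) = a `^ q.
Proof. by move=> a0; rewrite -(powR_mulrn 2 a0) -powRrM mulrC divfK. Qed.

Lemma powR_subn a p n : 0 < a -> a `^ (p - n%:R) = a `^ p / a ^+ n.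
Proof. by move=> a0; rewrite powRB ?(powR_mulrn n (ltW a0)) // (gt_eqF a0) implybT. Qed.

(* Each fraction [x / (a + b)] lies in [0, 1], hence below its own [q]-th power. *)
Lemma powR_subadd a b q : 0 <= a -> 0 <= b -> 0 <= q <= 1 ->
  (a + b) `^ q <= a `^ q + b `^ q.
Proof.
move=> a0 b0 /andP[q0 q1].
have [/eqP|abn0] := eqVneq (a + b) 0.
  by rewrite paddr_eq0 // => /andP[/eqP -> /eqP ->]; rewrite addr0 lerDl powR_ge0.
have ab_gt0 : 0 < a + b by rewrite lt_def abn0 addr_ge0.
have scale x : 0 <= x -> x `^ q = (a + b) `^ q * (x / (a + b)) `^ q.
  move=> x0; rewrite -powRM ?divr_ge0 ?(ltW ab_gt0) //.
  by rewrite mulrC divfK.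
have frac_le x : 0 <= x -> x <= a + b -> x / (a + b) <= (x / (a + b)) `^ q.
  move=> x0 xab; apply: ge0_ger1_powR => //.
  by rewrite divr_ge0 ?(ltW ab_gt0) //= ler_pdivrMr // mul1r.
rewrite (scale a a0) (scale b b0) -mulrDr -[leLHS]mulr1 ler_wpM2l ?powR_ge0 //.
apply: le_trans (lerD (frac_le a a0 _) (frac_le b b0 _)); rewrite ?lerDl ?lerDr //.
by rewrite -mulrDl divff.
Qed.

Lemma powR_dist a b q : 0 <= a -> 0 <= b -> 0 <= q <= 1 ->
  `|a `^ q - b `^ q| <= `|a - b| `^ q.
Proof.
move=> a0 b0 hq; have q0 : 0 <= q by case/andP: hq.
wlog ba : a b a0 b0 / b <= a.
  move=> H; have [|/ltW ab] := leP b a; first exact: H.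
  by rewrite distrC (distrC a); apply: H.
have ab0 : 0 <= a - b by rewrite subr_ge0.
rewrite !ger0_norm ?subr_ge0 //; last by apply: ge0_ler_powR; rewrite ?nnegrE.
by rewrite lerBlDl; have := powR_subadd ab0 b0 hq; rewrite subrK addrC.
Qed.

Lemma dist_powR_exprn_le th p n : 0 < th <= 1 -> 0 <= p <= 2 ->
  `|th `^ p - th ^+ n| <= (1 - th ^+ 2) *+ n.+1.
Proof.
move=> /andP[th0 th1] /andP[p0 p2].
have thp1 : th `^ p <= 1 by rewrite powR_le1 // (ltW th0) th1.
have sqr_thp : th ^+ 2 <= th `^ p.
  by rewrite -(powR_mulrn 2 (ltW th0)); apply: ger_powR; rewrite ?th0.
have thn1 : th ^+ n <= 1 by rewrite exprn_ile1 // ltW.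
have bernoulli : 1 - th ^+ n <= (1 - th ^+ 2) *+ n.
  have := @normrXB_le _ 1 th n; rewrite expr1n normr1 (ger0_norm (ltW th0)).
  rewrite !ger0_norm ?subr_ge0 // => /(_ (lexx _) th1) /le_trans; apply.
  by rewrite ler_wMn2r // lerB // expr2 ler_piMl // ltW.
rewrite mulrS; apply: le_trans (lerD (lerB (lexx 1) sqr_thp) bernoulli).
rewrite ler_norml; apply/andP; split; lra.
Qed.

Lemma onem_powR_mul_le th p : 0 <= th <= 1 -> 0 <= p <= 1 ->
  (1 - th `^ p) * th `^ p <= (1 - th ^+ 2) `^ p.
Proof.
move=> /andP[th0 th1] /andP[p0 p1].
have thp1 : th `^ p <= 1 by rewrite powR_le1 ?th0.
have th_thp : th <= th `^ p by rewrite ge0_ger1_powR ?th0.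
have sqr_th : th ^+ 2 <= th by rewrite expr2 ler_piMl.
have onem_sqr : 1 - th ^+ 2 <= (1 - th ^+ 2) `^ p.
  by rewrite ge0_ger1_powR // subr_ge0 exprn_ile1 //= lerBlDr lerDl sqr_ge0.
apply: le_trans onem_sqr; apply: le_trans (_ : 1 - th `^ p <= _); last lra.
by rewrite ler_piMr ?subr_ge0.
Qed.

Lemma regularized_polar eps r : 0 < eps -> 0 < r -> exists rho th : R,
  [/\ 0 < rho, 0 < th <= 1, r = rho * th & eps = rho ^+ 2 * (1 - th ^+ 2)].
Proof.
move=> eps0 r0; set rho := Num.sqrt (eps + r ^+ 2).
have sum_gt0 : 0 < eps + r ^+ 2 by rewrite ltr_wpDr ?sqr_ge0.
have rho0 : 0 < rho by rewrite sqrtr_gt0.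
have rho_sqr : rho ^+ 2 = eps + r ^+ 2 by rewrite sqr_sqrtr ?ltW.
exists rho, (r / rho); split=> //.
- rewrite divr_gt0 //= ler_pdivrMr // mul1r.
  rewrite -(ler_pXn2r (_ : 0 < 2)%N) ?nnegrE ?(ltW r0) ?(ltW rho0) //.
  by rewrite rho_sqr lerDr (ltW eps0).
- by rewrite mulrC divfK ?gt_eqF.
rewrite expr_div_n mulrBr mulr1 [_ * (_ / _)]mulrC divfK ?expf_neq0 ?gt_eqF //.
by rewrite rho_sqr addrK.
Qed.

Lemma regularized_powR_defect_le eps r p n : 0 < eps -> 0 <= r -> 0 < p <= 2 ->
  `|r `^ (p - n%:R) - (eps + r ^+ 2) `^ ((p - n%:R) / 2)| * r ^+ n
  <= eps `^ (p / 2) *+ n.+1.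
Proof.
move=> eps0 r0 /andP[p0 p2].
have [->|rn0] := eqVneq r 0.
  case: n => [|n]; last by rewrite [0 ^+ n.+1]exprS mul0r mulr0 mulrn_wge0 ?powR_ge0.
  rewrite subr0 powR0 ?gt_eqF // expr0n addr0 sub0r normrN expr0 mulr1.
  by rewrite ger0_norm ?powR_ge0.
have r_gt0 : 0 < r by rewrite lt_def rn0.
have [rho [th [rho0 /andP[th0 th1] -> ->]]] := regularized_polar eps0 r_gt0.
have -> : rho ^+ 2 * (1 - th ^+ 2) + (rho * th) ^+ 2 = rho ^+ 2 by ring.
have onem_sqr0 : 0 <= 1 - th ^+ 2 by rewrite subr_ge0 exprn_ile1 // ltW.
rewrite (powR_sqr_half _ (ltW rho0)) (powRM _ (ltW rho0) (ltW th0)).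
rewrite (powRM _ (sqr_ge0 rho) onem_sqr0) (powR_sqr_half _ (ltW rho0)) !powR_subn //.
have -> : rho `^ p / rho ^+ n * (th `^ p / th ^+ n) - rho `^ p / rho ^+ n
    = rho `^ p * (th `^ p - th ^+ n) / (rho * th) ^+ n.
  by rewrite exprMn; field; rewrite !expf_neq0 ?gt_eqF.
rewrite normrM normfV (ger0_norm (exprn_ge0 _ (mulr_ge0 (ltW rho0) (ltW th0)))).
rewrite divfK ?expf_neq0 ?mulf_neq0 ?gt_eqF // normrM ger0_norm ?powR_ge0 //.
rewrite -mulrnAr ler_wpM2l ?powR_ge0 //.
apply: le_trans (dist_powR_exprn_le n _ _) _; rewrite ?th0 ?th1 ?(ltW p0) //.
rewrite ler_wMn2r // ge0_ger1_powR ?onem_sqr0 //= ?lerBlDr ?lerDl ?sqr_ge0 //.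
by rewrite ler_pdivrMr // mul1r.
Qed.

Lemma regularized_powR_gap_le eps r p : 0 < eps -> 0 <= r -> 0 < p <= 1 ->
  `|r `^ p - (eps + r ^+ 2) `^ (p / 2)| * r <= eps `^ p * r `^ (1 - p).
Proof.
move=> eps0 r0 /andP[p0 p1].
have [->|rn0] := eqVneq r 0; first by rewrite mulr0 mulr_ge0 ?powR_ge0.
have r_gt0 : 0 < r by rewrite lt_def rn0.
have [rho [th [rho0 /andP[th0 th1] -> ->]]] := regularized_polar eps0 r_gt0.
have -> : rho ^+ 2 * (1 - th ^+ 2) + (rho * th) ^+ 2 = rho ^+ 2 by ring.
have onem_sqr0 : 0 <= 1 - th ^+ 2 by rewrite subr_ge0 exprn_ile1 // ltW.
have rth0 : 0 < rho * th by rewrite mulr_gt0.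
have thp1 : th `^ p <= 1 by rewrite powR_le1 // ?(ltW th0) ?th1 ?(ltW p0).
rewrite (powR_sqr_half _ (ltW rho0)) powRB ?powRr1 ?(ltW rth0) ?(gt_eqF rth0) ?implybT //.
rewrite mulrA ler_pdivlMr ?powR_gt0 //.
rewrite (powRM _ (ltW rho0) (ltW th0)) (powRM _ (sqr_ge0 rho) onem_sqr0).
rewrite expr2 (powRM _ (ltW rho0) (ltW rho0)).
have -> : rho `^ p * th `^ p - rho `^ p = - (rho `^ p * (1 - th `^ p)) by ring.
rewrite normrN ger0_norm ?mulr_ge0 ?powR_ge0 ?subr_ge0 //.
set K := rho `^ p * rho `^ p * (rho * th).
have -> : rho `^ p * (1 - th `^ p) * (rho * th) * (rho `^ p * th `^ p)
    = K * ((1 - th `^ p) * th `^ p) by rewrite /K; ring.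
have -> : rho `^ p * rho `^ p * (1 - th ^+ 2) `^ p * (rho * th)
    = K * (1 - th ^+ 2) `^ p by rewrite /K; ring.
rewrite ler_wpM2l ?mulr_ge0 ?powR_ge0 ?(ltW rho0) ?(ltW th0) //.
by apply: onem_powR_mul_le; rewrite ?(ltW th0) ?th1 ?(ltW p0) ?p1.
Qed.

End RealPowers.

Section RegularizedModulus.
Variable R : realType.
Implicit Types (eps p : R) (z w u v : R[i]).

Lemma cabs_ge0 z : 0 <= cabs z.
Proof. by case: z => a b; rewrite /cabs sqrtr_ge0. Qed.

Lemma cabsE z : ((cabs z)%:C)%C = `|z|.
Proof. by case: z => a b; rewrite normc_def. Qed.

Lemma cabsR (x : R) : cabs (x%:C)%C = `|x|.
Proof. by rewrite /cabs /= expr0n addr0 sqrtr_sqr. Qed.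

Lemma cabsM z w : cabs (z * w) = cabs z * cabs w.
Proof. exact: Normc.normcM. Qed.

Lemma cabsD z w : cabs (z + w) <= cabs z + cabs w.
Proof. exact: le_normcD. Qed.

Lemma cabsV z : cabs z^-1 = (cabs z)^-1.
Proof. exact: Normc.normcV. Qed.

Lemma cabsX z n : cabs (z ^+ n) = cabs z ^+ n.
Proof. by apply: complexI; rewrite rmorphXn /= !cabsE normrX. Qed.

Lemma cabs_dist z w : `|cabs z - cabs w| <= cabs (z - w).
Proof. exact: (@ler_dist_dist _ (Rcomplex R) z w). Qed.

Lemma cabs_le z x : (cabs z <= x) = (`|z| <= x%:C)%C.
Proof. by rewrite -cabsE lecR. Qed.

Lemma cabsXB_le u v n : cabs u <= 1 -> cabs v <= 1 ->
  cabs (u ^+ n - v ^+ n) <= cabs (u - v) *+ n.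
Proof. by rewrite !cabs_le rmorphMn /= cabsE rmorph1; apply: normrXB_le. Qed.

Definition regabs eps z := Num.sqrt (eps + cabs z ^+ 2).

Definition regsgn eps z := z / ((regabs eps z)%:C)%C.

Definition regB eps p n z := ((regabs eps z `^ p)%:C)%C * regsgn eps z ^+ n.

Lemma regabs_gt0 eps z : 0 < eps -> 0 < regabs eps z.
Proof. by move=> eps0; rewrite sqrtr_gt0 ltr_wpDr ?sqr_ge0. Qed.

Lemma cabs_le_regabs eps z : 0 <= eps -> cabs z <= regabs eps z.
Proof.
move=> eps0; rewrite -[leLHS]ger0_norm ?cabs_ge0 // -sqrtr_sqr.
by rewrite ler_sqrt ?lerDr // addr_ge0 ?sqr_ge0.
Qed.

Lemma regabsE eps z : 0 <= eps -> regabs eps z = cabs ((cabs z) +i* Num.sqrt eps)%C.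
Proof. by move=> eps0; rewrite /regabs /cabs /= sqr_sqrtr // addrC. Qed.

Lemma regabs_dist eps z w : 0 <= eps -> `|regabs eps z - regabs eps w| <= cabs (z - w).
Proof.
move=> eps0; rewrite !regabsE //; apply: le_trans (cabs_dist _ _) _.
have -> : ((cabs z +i* Num.sqrt eps) - (cabs w +i* Num.sqrt eps) = (cabs z - cabs w)%:C)%C.
  by simpc.
by rewrite cabsR cabs_dist.
Qed.

Lemma cabs_regsgn_le1 eps z : 0 < eps -> cabs (regsgn eps z) <= 1.
Proof.
move=> eps0; have rz0 := regabs_gt0 z eps0.
rewrite cabsM cabsV cabsR ger0_norm ?(ltW rz0) // ler_pdivrMr // mul1r.
exact/cabs_le_regabs/ltW.
Qed.

Lemma regsgn_dist_le eps z w : 0 < eps ->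
  cabs (regsgn eps z - regsgn eps w) <= 2 * cabs (z - w) / regabs eps w.
Proof.
move=> eps0; have rz0 := regabs_gt0 z eps0; have rw0 := regabs_gt0 w eps0.
have rz_neq0 := gt_eqF rz0; have rw_neq0 := gt_eqF rw0.
rewrite /regsgn; set rz := regabs eps z; set rw := regabs eps w.
have -> : (z / rz%:C - w / rw%:C
    = (z * (rw - rz)%:C + (z - w) * rz%:C) / (rz * rw)%:C)%C.
  by rewrite !rmorphB rmorphM /=; field; rewrite !fmorph_eq0 rz_neq0 rw_neq0.
rewrite cabsM cabsV cabsR ger0_norm ?mulr_ge0 ?(ltW rz0) ?(ltW rw0) //.
rewrite ler_pdivrMr ?mulr_gt0 //.
have -> : 2 * cabs (z - w) / rw * (rz * rw) = cabs (z - w) * rz + cabs (z - w) * rz.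
  by field; rewrite rw_neq0.
apply: le_trans (cabsD _ _) _; rewrite !cabsM !cabsR (ger0_norm (ltW rz0)).
apply: lerD => //; rewrite mulrC; apply: ler_pM; rewrite ?cabs_ge0 ?normr_ge0 //.
  by rewrite distrC regabs_dist // ltW.
exact/cabs_le_regabs/ltW.
Qed.

Lemma regabs_powR_regsgn_dist_le eps p z w : 0 < eps -> 0 <= p <= 1 ->
  regabs eps w `^ p * cabs (regsgn eps z - regsgn eps w) <= 2 * cabs (z - w) `^ p.
Proof.
move=> eps0 /andP[p0 p1]; have rw0 := regabs_gt0 w eps0.
have [rw_le_d|d_lt_rw] := leP (regabs eps w) (cabs (z - w)).
  rewrite mulrC; apply: ler_pM; rewrite ?cabs_ge0 ?powR_ge0 //.
    apply: le_trans (@ler_normB _ (Rcomplex R) _ _) _.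
    by rewrite -[2]/(1 + 1) lerD ?cabs_regsgn_le1.
  by apply: ge0_ler_powR; rewrite ?nnegrE ?cabs_ge0 ?(ltW rw0).
apply: le_trans (ler_wpM2l (powR_ge0 _ _) (regsgn_dist_le z w eps0)) _.
set rw := regabs eps w; set d := cabs (z - w).
have -> : rw `^ p * (2 * d / rw) = 2 * (rw `^ p * (d / rw)) by ring.
have -> : d `^ p = rw `^ p * (d / rw) `^ p.
  rewrite -powRM ?divr_ge0 ?cabs_ge0 ?(ltW rw0) //.
  by rewrite mulrC divfK // lt0r_neq0.
rewrite ler_wpM2l // ler_wpM2l ?powR_ge0 // ge0_ger1_powR // divr_ge0 ?cabs_ge0 ?(ltW rw0) //=.
by rewrite ler_pdivrMr // mul1r ltW.
Qed.

Lemma regB_holder eps p n z w : 0 < eps -> 0 <= p <= 1 ->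
  cabs (regB eps p n z - regB eps p n w) <= cabs (z - w) `^ p *+ (2 * n).+1.
Proof.
move=> eps0 hp; have p0 : 0 <= p by case/andP: hp.
have u1 := cabs_regsgn_le1 z eps0; have v1 := cabs_regsgn_le1 w eps0.
rewrite /regB; set u := regsgn eps z; set v := regsgn eps w.
set rz := regabs eps z; set rw := regabs eps w.
have -> : ((rz `^ p)%:C * u ^+ n - (rw `^ p)%:C * v ^+ n
    = (rz `^ p - rw `^ p)%:C * u ^+ n + (rw `^ p)%:C * (u ^+ n - v ^+ n))%C.
  by rewrite rmorphB /=; ring.
apply: le_trans (cabsD _ _) _; rewrite !cabsM !cabsR cabsX (ger0_norm (powR_ge0 _ _)).
rewrite mulrS mulrnA; apply: lerD.
  rewrite -[leRHS]mulr1; apply: ler_pM; rewrite ?normr_ge0 ?exprn_ge0 ?cabs_ge0 //.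
    apply: le_trans (powR_dist _ _ hp) _; rewrite ?(ltW (regabs_gt0 _ eps0)) //.
    apply: ge0_ler_powR; rewrite ?nnegrE ?normr_ge0 ?cabs_ge0 //.
    exact/regabs_dist/ltW.
  by rewrite exprn_ile1 ?cabs_ge0.
apply: le_trans (ler_wpM2l (powR_ge0 _ _) (cabsXB_le n u1 v1)) _.
by rewrite mulrnAr ler_wMn2r // -mulr_natl regabs_powR_regsgn_dist_le.
Qed.

End RegularizedModulus.

Lemma scrB_regB (R : realType) (p chi t : R) n (z : R[i]) : 0 < `|t| `^ (- chi) ->
  scrB p chi n t z = regB (`|t| `^ (- chi)) p n z.
Proof.
move=> eps0; rewrite /scrB /regB /regsgn; have rz0 := regabs_gt0 z eps0.
have <- : regabs (`|t| `^ (- chi)) z ^+ 2 = `|t| `^ (- chi) + cabs z ^+ 2.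
  by rewrite sqr_sqrtr // addr_ge0 ?sqr_ge0 // ltW.
rewrite (powR_sqr_half _ (ltW rz0)) (powR_subn _ _ rz0) expr_div_n.
by rewrite fmorph_div rmorphXn /= mulrAC mulrA.
Qed.

Lemma scrBt_scrB (R : realType) (p chi t : R) n (z : R[i]) :
  ((scrBt p chi n t z)%:C)%C = scrB p chi n t ((cabs z)%:C)%C.
Proof. by rewrite /scrBt /scrB cabsR (ger0_norm (cabs_ge0 z)) rmorphM rmorphXn. Qed.

Theorem lemma4p4 (R : realType) (d : nat) (lam r0 chi : R) (n : nat) :
  (1 <= d <= 3)%N -> lam < 1 / 2 -> (d = 3%N -> - (1 / 3) < lam) ->
  1 <= r0 -> 0 < chi ->
  let p := pc d lam in
  ((0 < p < 2) ->
     exists C : R, forall (t : R) (z : R[i]), r0 <= t ->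
       cabs (scrA p chi n t z) <= C * `|t| `^ (- (p / 2 * chi)))
  /\
  ((0 < p < 1) ->
     (exists C : R, forall (t : R) (z w : R[i]), r0 <= t ->
        `|scrBt p chi n t z - scrBt p chi n t w|
        + cabs (scrB p chi n t z - scrB p chi n t w)
        <= C * cabs (z - w) `^ p)
     /\
     (forall (t : R) (z : R[i]), r0 <= t ->
        cabs (scrA p chi 0 t z * z) <= `|t| `^ (- (p * chi)) * cabs z `^ (1 - p))).
Proof.
move=> _ _ _ r0_ge1 chi0 p.
have eps_gt0 t : r0 <= t -> 0 < `|t| `^ (- chi).
  by move=> r0t; rewrite powR_gt0 // normr_gt0 gt_eqF // (lt_le_trans ltr01 (le_trans r0_ge1 r0t)).
have eps_powR t q : `|t| `^ (- (q * chi)) = (`|t| `^ (- chi)) `^ q.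
  by rewrite -powRrM mulNr mulrC.
split=> [/andP[p0 p2]|/andP[p0 p1]].
  exists n.+1%:R => t z /eps_gt0 eps0.
  rewrite /scrA cabsM cabsR cabsX eps_powR mulr_natl.
  by apply: regularized_powR_defect_le; rewrite ?cabs_ge0 ?p0 ?ltW.
have hp : 0 <= p <= 1 by rewrite !ltW.
split=> [|t z /eps_gt0 eps0]; last first.
  rewrite /scrA !cabsM cabsR cabsX expr0 mulr1 subr0 eps_powR.
  by apply: regularized_powR_gap_le; rewrite ?cabs_ge0 ?p0 ?ltW.
exists ((2 * n).+1 * 2)%:R => t z w /eps_gt0 eps0.
have Bt_holder : `|scrBt p chi n t z - scrBt p chi n t w| <= cabs (z - w) `^ p *+ (2 * n).+1.
  have -> : `|scrBt p chi n t z - scrBt p chi n t w|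
      = cabs (scrB p chi n t (cabs z)%:C - scrB p chi n t (cabs w)%:C)%C.
    by rewrite -!scrBt_scrB -rmorphB cabsR.
  rewrite !scrB_regB //.
  apply: le_trans (regB_holder _ _ _ eps0 hp) _; rewrite ler_wMn2r //.
  apply: ge0_ler_powR; rewrite ?nnegrE ?cabs_ge0 ?(ltW p0) //.
  have -> : ((cabs z)%:C - (cabs w)%:C = (cabs z - cabs w)%:C)%C by simpc.
  by rewrite cabsR cabs_dist.
have B_holder : cabs (scrB p chi n t z - scrB p chi n t w) <= cabs (z - w) `^ p *+ (2 * n).+1.
  by rewrite !scrB_regB // regB_holder.
by rewrite mulr_natl mulrnA mulr2n lerD.
Qed.
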